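(* Let $\Gamma$ be a group and $S$ a strongly $\Gamma$-graded semigroup with local units. Then (1) $S$ is regular if and only if $S_\varepsilon$ is regular; and (2) $S$ is an inverse semigroup if and only if $S_\varepsilon$ is an inverse semigroup.
   Context: Semigroups have a zero; $S$ is $\Gamma$-graded via $\deg:S\setminus\{0\}\to\Gamma$ with $\deg(st)=\deg(s)\deg(t)$ whenever $st\neq0$; $S_\alpha=\deg^{-1}(\alpha)\cup\{0\}$, $\varepsilon$ the identity of $\Gamma$; strongly graded means $S_\alpha S_\beta=S_{\alpha\beta}$ for all $\alpha,\beta$. $S$ has local units if for each $s$ there are idempotents $u,v$ with $us=s=sv$. Regular: every $s$ has $t$ with $sts=s$. *)

Record Group := {
  g_car :> Type;
  g_mul : g_car -> g_car -> g_car;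
  g_one : g_car;
  g_inv : g_car -> g_car;
  g_assoc : forall a b c, g_mul a (g_mul b c) = g_mul (g_mul a b) c;
  g_mul1l : forall a, g_mul g_one a = a;
  g_mul1r : forall a, g_mul a g_one = a;
  g_mulVl : forall a, g_mul (g_inv a) a = g_one;
  g_mulVr : forall a, g_mul a (g_inv a) = g_one
}.

Record Semigroup0 := {
  s_car :> Type;
  s_mul : s_car -> s_car -> s_car;
  s_zero : s_car;
  s_assoc : forall a b c, s_mul a (s_mul b c) = s_mul (s_mul a b) c;
  s_zero_l : forall a, s_mul s_zero a = s_zero;
  s_zero_r : forall a, s_mul a s_zero = s_zero
}.

Section Defs.
Variable (G : Group) (S : Semigroup0).
Local Notation "x * y" := (s_mul S x y).

Definition idempotent (e : S) : Prop := e * e = e.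

(* deg : S\{0} -> G; represented by a total function whose value at 0 is
   irrelevant. *)
Definition is_grading (deg : S -> G) : Prop :=
  forall s t : S, s * t <> s_zero S -> deg (s * t) = g_mul G (deg s) (deg t).

Definition component (deg : S -> G) (a : G) (x : S) : Prop :=
  x = s_zero S \/ (x <> s_zero S /\ deg x = a).

Definition strongly_graded (deg : S -> G) : Prop :=
  is_grading deg /\
  forall a b : G, forall x : S,
    component deg (g_mul G a b) x <->
    exists s t, component deg a s /\ component deg b t /\ x = s * t.

Definition has_local_units : Prop :=
  forall s : S, exists u v : S, idempotent u /\ idempotent v /\ u * s = s /\ s * v = s.

(* Regularity / inverse semigroup, relative to a subsemigroup given by a
   predicate P (use P := fun _ => True for S itself). *)
Definition regular_on (P : S -> Prop) : Prop :=
  forall s, P s -> exists t, P t /\ s * t * s = s.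

Definition inverse_on (P : S -> Prop) : Prop :=
  forall s, P s -> exists t, P t /\ s * t * s = s /\ t * s * t = t /\
    forall t', P t' -> s * t' * s = s -> t' * s * t' = t' -> t' = t.

End Defs.

Definition regular_sg (S : Semigroup0) : Prop := regular_on S (fun _ => True).
Definition inverse_sg (S : Semigroup0) : Prop := inverse_on S (fun _ => True).

(** Every [s] factors as [s = x * (b * s)]: a local unit [u] with [u * s = s]
    is an idempotent, hence of degree [ε = deg s * (deg s)^-1], so strong
    grading writes [u = x * b] with [deg b = (deg s)^-1], and then [b * s]
    lies in [S_ε].  An inverse [y] of [b * s] in [S_ε] makes [y * b] an inverse
    of [s].  Conversely, comparing degrees in [s * t * s = s] forces every
    inverse of a nonzero [s] in [S_ε] to lie in [S_ε].  For inverse semigroups,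
    all idempotents of [S] lie in [S_ε], where they commute because [S_ε] is
    inverse; and a regular semigroup whose idempotents commute is inverse. *)

From Stdlib Require Import Classical.

Local Notation "x * y" := (s_mul _ x y).

Ltac reassoc := repeat rewrite <- s_assoc.

Lemma g_mul_cancel_l (G : Group) (a b c : G) : g_mul G a b = g_mul G a c -> b = c.
Proof.
  intro H. apply (f_equal (g_mul G (g_inv G a))) in H.
  rewrite !g_assoc, !g_mulVl, !g_mul1l in H. exact H.
Qed.

Section Semigroup.
Variable S : Semigroup0.

Lemma mul_neq0_l (x y : S) : x * y <> s_zero S -> x <> s_zero S.
Proof. intros H E; apply H; rewrite E; apply s_zero_l. Qed.

Lemma mul_neq0_r (x y : S) : x * y <> s_zero S -> y <> s_zero S.
Proof. intros H E; apply H; rewrite E; apply s_zero_r. Qed.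

Definition inverse_of (t s : S) : Prop := s * t * s = s /\ t * s * t = t.

Lemma inverse_of_sym (t s : S) : inverse_of t s -> inverse_of s t.
Proof. intros [H1 H2]; split; assumption. Qed.

Lemma idempotent_inverse_of_self (e : S) : idempotent S e -> inverse_of e e.
Proof. unfold idempotent; intros He; split; rewrite !He; reflexivity. Qed.

Lemma inverse_of_sandwich (s y : S) : s * y * s = s -> inverse_of (y * s * y) s.
Proof.
  intros H; split.
  - transitivity ((s * y * s) * y * s); [reassoc; reflexivity|].
    rewrite !H; reflexivity.
  - transitivity (y * ((s * y * s) * y * s) * y); [reassoc; reflexivity|].
    rewrite !H; reflexivity.
Qed.

Lemma idempotent_mul_regular_l (s t : S) : s * t * s = s -> idempotent S (s * t).
Proof. intros H; unfold idempotent; rewrite s_assoc, H; reflexivity. Qed.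

Lemma idempotent_mul_regular_r (s t : S) : s * t * s = s -> idempotent S (t * s).
Proof.
  intros H; unfold idempotent.
  transitivity (t * (s * t * s)); [reassoc; reflexivity|]. rewrite H; reflexivity.
Qed.

Lemma inverse_on_regular_on (P : S -> Prop) : inverse_on S P -> regular_on S P.
Proof. intros HI s Hs; destruct (HI s Hs) as [t [Ht [H _]]]; exists t; auto. Qed.

Section CommutingIdempotents.
Hypothesis idempotents_commute :
  forall e f : S, idempotent S e -> idempotent S f -> e * f = f * e.

Lemma inverse_of_unique (s t t' : S) : inverse_of t s -> inverse_of t' s -> t = t'.
Proof.
  intros [H1 H2] [H3 H4].
  pose proof (idempotent_mul_regular_l s t H1) as Ist.
  pose proof (idempotent_mul_regular_r s t H1) as Its.
  pose proof (idempotent_mul_regular_l s t' H3) as Ist'.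
  pose proof (idempotent_mul_regular_r s t' H3) as It's.
  assert (Ht : t = t' * s * t).
  { transitivity (t * (s * t' * s) * t); [rewrite H3; symmetry; exact H2|].
    transitivity ((t * s) * (t' * s) * t); [reassoc; reflexivity|].
    rewrite (idempotents_commute _ _ Its It's).
    transitivity (t' * s * (t * s * t)); [reassoc; reflexivity|].
    rewrite H2; reflexivity. }
  assert (Ht' : t' = t' * s * t).
  { transitivity (t' * (s * t * s) * t'); [rewrite H1; symmetry; exact H4|].
    transitivity (t' * ((s * t) * (s * t'))); [reassoc; reflexivity|].
    rewrite (idempotents_commute _ _ Ist Ist').
    transitivity ((t' * s * t') * s * t); [reassoc; reflexivity|].
    rewrite H4; reflexivity. }
  rewrite Ht, <- Ht'; reflexivity.
Qed.

Lemma regular_idempotents_commute_inverse : regular_sg S -> inverse_sg S.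
Proof.
  intros HR s _. destruct (HR s I) as [y [_ Hy]].
  destruct (inverse_of_sandwich s y Hy) as [H1 H2].
  exists (y * s * y). repeat split; [exact H1 | exact H2 |].
  intros t' _ H3 H4. exact (inverse_of_unique s t' (y * s * y) (conj H3 H4) (conj H1 H2)).
Qed.

End CommutingIdempotents.

Section InverseSubsemigroup.
Variable P : S -> Prop.
Hypothesis P_mul : forall x y, P x -> P y -> P (x * y).
Hypothesis P_inverse : inverse_on S P.

Lemma inverse_on_unique (s t t' : S) :
  P s -> P t -> P t' -> inverse_of t s -> inverse_of t' s -> t = t'.
Proof.
  intros Ps Pt Pt' [H1 H2] [H3 H4].
  destruct (P_inverse s Ps) as [u [_ [_ [_ Hu]]]].
  rewrite (Hu t Pt H1 H2), (Hu t' Pt' H3 H4); reflexivity.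
Qed.

(* The inverse [x] of [e * f] is idempotent, being equal to [f * x * e];
   so [e * f], as an inverse of the idempotent [x], equals [x]. *)
Lemma inverse_on_idempotent_mul (e f : S) :
  P e -> P f -> idempotent S e -> idempotent S f -> idempotent S (e * f).
Proof.
  intros Pe Pf He Hf.
  destruct (P_inverse _ (P_mul _ _ Pe Pf)) as [x [Px [H1 [H2 _]]]].
  assert (Hfxe : inverse_of (f * x * e) (e * f)).
  { unfold idempotent in He, Hf; split.
    - transitivity (e * (f * f) * x * (e * e) * f); [reassoc; reflexivity|].
      rewrite He, Hf. transitivity (e * f * x * (e * f)); [reassoc; reflexivity|].
      exact H1.
    - transitivity (f * (x * (e * e) * (f * f) * x) * e); [reassoc; reflexivity|].
      rewrite He, Hf. transitivity (f * (x * (e * f) * x) * e); [reassoc; reflexivity|].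
      rewrite H2; reflexivity. }
  assert (Pfxe : P (f * x * e)) by auto.
  assert (Hx : f * x * e = x)
    by exact (inverse_on_unique _ _ _ (P_mul _ _ Pe Pf) Pfxe Px Hfxe (conj H1 H2)).
  assert (Ix : idempotent S x).
  { unfold idempotent. transitivity ((f * x * e) * (f * x * e)); [rewrite Hx; reflexivity|].
    transitivity (f * (x * (e * f) * x) * e); [reassoc; reflexivity|].
    rewrite H2; exact Hx. }
  assert (Hef : e * f = x).
  { apply (inverse_on_unique x); auto.
    - exact (inverse_of_sym _ _ (conj H1 H2)).
    - exact (idempotent_inverse_of_self x Ix). }
  rewrite Hef; exact Ix.
Qed.

Lemma inverse_on_idempotents_commute (e f : S) :
  P e -> P f -> idempotent S e -> idempotent S f -> e * f = f * e.
Proof.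
  intros Pe Pf He Hf.
  pose proof (inverse_on_idempotent_mul e f Pe Pf He Hf) as Ief.
  pose proof (inverse_on_idempotent_mul f e Pf Pe Hf He) as Ife.
  unfold idempotent in He, Hf, Ief, Ife.
  apply (inverse_on_unique (e * f)); auto.
  - exact (idempotent_inverse_of_self _ Ief).
  - split.
    + transitivity (e * (f * f) * (e * e) * f); [reassoc; reflexivity|].
      rewrite He, Hf. transitivity ((e * f) * (e * f)); [reassoc; reflexivity|].
      exact Ief.
    + transitivity (f * (e * e) * (f * f) * e); [reassoc; reflexivity|].
      rewrite He, Hf. transitivity ((f * e) * (f * e)); [reassoc; reflexivity|].
      exact Ife.
Qed.

End InverseSubsemigroup.

End Semigroup.

Section Grading.
Variables (G : Group) (S : Semigroup0) (deg : S -> G).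
Hypothesis deg_mul : is_grading G S deg.

Local Notation component := (component G S deg).
Local Notation S_eps := (component (g_one G)).

Lemma component_zero (a : G) : component a (s_zero S).
Proof. left; reflexivity. Qed.

Lemma component_deg (s : S) : component (deg s) s.
Proof. destruct (classic (s = s_zero S)); [left | right]; auto. Qed.

Lemma component_mul (a b : G) (x y : S) :
  component a x -> component b y -> component (g_mul G a b) (x * y).
Proof.
  intros Hx Hy. destruct (classic (x * y = s_zero S)) as [H0|Hn]; [left; exact H0|].
  right; split; [exact Hn|]. rewrite (deg_mul x y Hn).
  destruct Hx as [Hx|[_ Hx]]; [exfalso; exact (mul_neq0_l _ _ _ Hn Hx)|].
  destruct Hy as [Hy|[_ Hy]]; [exfalso; exact (mul_neq0_r _ _ _ Hn Hy)|].
  rewrite Hx, Hy; reflexivity.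
Qed.

Lemma component_one_mul (x y : S) : S_eps x -> S_eps y -> S_eps (x * y).
Proof.
  intros Hx Hy. pose proof (component_mul _ _ _ _ Hx Hy) as Hxy.
  rewrite g_mul1l in Hxy; exact Hxy.
Qed.

Lemma idempotent_component_one (e : S) : idempotent S e -> S_eps e.
Proof.
  unfold idempotent; intros He.
  destruct (classic (e = s_zero S)) as [H0|Hn]; [left; exact H0|].
  right; split; [exact Hn|].
  assert (Hee : e * e <> s_zero S) by (rewrite He; exact Hn).
  pose proof (deg_mul e e Hee) as D. rewrite He in D.
  apply (g_mul_cancel_l G (deg e)). rewrite g_mul1r. symmetry; exact D.
Qed.

Lemma regular_cofactor_component_one (s t : S) :
  S_eps s -> s <> s_zero S -> s * t * s = s -> S_eps t.
Proof.
  intros Hs Hn Hst. destruct Hs as [Hs|[_ Hd]]; [contradiction|].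
  assert (H1 : s * t * s <> s_zero S) by (rewrite Hst; exact Hn).
  pose proof (mul_neq0_l _ _ _ H1) as H2.
  pose proof (deg_mul _ _ H1) as D. rewrite Hst in D.
  rewrite (deg_mul _ _ H2), Hd, g_mul1l, g_mul1r in D.
  right; split; [exact (mul_neq0_r _ _ _ H2) | symmetry; exact D].
Qed.

Lemma regular_component_one_of_regular : regular_sg S -> regular_on S S_eps.
Proof.
  intros HR s Hs. destruct (classic (s = s_zero S)) as [H0|Hn].
  - exists (s_zero S); split; [apply component_zero|].
    rewrite H0, !s_zero_l; reflexivity.
  - destruct (HR s I) as [t [_ Ht]].
    exists t; split; [exact (regular_cofactor_component_one _ _ Hs Hn Ht) | exact Ht].
Qed.

Lemma inverse_component_one_of_inverse : inverse_sg S -> inverse_on S S_eps.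
Proof.
  intros HI s Hs. destruct (HI s I) as [t [_ [H1 [H2 Hu]]]].
  exists t; repeat split; [| exact H1 | exact H2 | intros t' _; exact (Hu t' I)].
  destruct (classic (s = s_zero S)) as [H0|Hn].
  - rewrite <- H2, H0, s_zero_r, s_zero_l; apply component_zero.
  - exact (regular_cofactor_component_one _ _ Hs Hn H1).
Qed.

Lemma idempotents_commute_of_inverse_component_one :
  inverse_on S S_eps ->
  forall e f : S, idempotent S e -> idempotent S f -> e * f = f * e.
Proof.
  intros HIE e f He Hf.
  apply (inverse_on_idempotents_commute S S_eps component_one_mul HIE);
    auto using idempotent_component_one.
Qed.

Section StronglyGraded.
Hypothesis strong : strongly_graded G S deg.
Hypothesis local_units : has_local_units S.

Lemma left_unit_factorization (s : S) :
  exists x b, component (g_inv G (deg s)) b /\ s = x * (b * s).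
Proof.
  destruct (local_units s) as [u [_ [Hu [_ [Hus _]]]]].
  assert (Eu : component (g_mul G (deg s) (g_inv G (deg s))) u)
    by (rewrite g_mulVr; exact (idempotent_component_one u Hu)).
  destruct (proj1 (proj2 strong _ _ u) Eu) as [x [b [_ [Hb Hxb]]]].
  exists x, b; split; [exact Hb|].
  rewrite s_assoc, <- Hxb, Hus; reflexivity.
Qed.

Lemma regular_of_regular_component_one : regular_on S S_eps -> regular_sg S.
Proof.
  intros HRE s _. destruct (left_unit_factorization s) as [x [b [Hb Hs]]].
  assert (Ebs : S_eps (b * s)).
  { rewrite <- (g_mulVl G (deg s)). exact (component_mul _ _ _ _ Hb (component_deg s)). }
  destruct (HRE _ Ebs) as [y [_ Hy]].
  exists (y * b); split; [exact I|].
  rewrite Hs at 1.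
  transitivity (x * ((b * s) * y * (b * s))); [reassoc; reflexivity|].
  rewrite Hy; symmetry; exact Hs.
Qed.

Lemma inverse_of_inverse_component_one : inverse_on S S_eps -> inverse_sg S.
Proof.
  intros HIE. apply regular_idempotents_commute_inverse.
  - exact (idempotents_commute_of_inverse_component_one HIE).
  - exact (regular_of_regular_component_one (inverse_on_regular_on _ _ HIE)).
Qed.

End StronglyGraded.

End Grading.

Theorem proposition2p13 (G : Group) (S : Semigroup0) (deg : S -> G) :
  strongly_graded G S deg ->
  has_local_units S ->
  (regular_sg S <-> regular_on S (component G S deg (g_one G))) /\
  (inverse_sg S <-> inverse_on S (component G S deg (g_one G))).
Proof.
  intros Hsg Hlu. pose proof (proj1 Hsg) as Hgr.
  split; split.
  - exact (regular_component_one_of_regular G S deg Hgr).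
  - exact (regular_of_regular_component_one G S deg Hgr Hsg Hlu).
  - exact (inverse_component_one_of_inverse G S deg Hgr).
  - exact (inverse_of_inverse_component_one G S deg Hgr Hsg Hlu).
Qed.
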